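(* Let $g:\mathbb{R}^p\to[-\infty,\infty]$ be a proper nearly convex function and $A\in\mathbb{R}^{p\times n}$ such that $A(\mathbb{R}^n)\cap\operatorname{ri}(\operatorname{dom} g)\neq\emptyset$. Then $(g\circ A)^*(w)=\inf\{g^*(v): v\in\mathbb{R}^p,\ A^Tv=w\}$ for all $w\in\mathbb{R}^n$. Moreover, if $(g\circ A)^*(w)\in\mathbb{R}$, there exists $v\in\mathbb{R}^p$ with $A^Tv=w$ and $(g\circ A)^*(w)=g^*(v)$.
   Context: A set $\Omega$ is nearly convex if there is a convex set $C$ with $C\subset\Omega\subset\overline{C}$; $\operatorname{ri}\Omega=\{a\in\Omega:\exists\delta>0,\ B(a;\delta)\cap\operatorname{aff}\Omega\subset\Omega\}$. A function $g$ is nearly convex if its epigraph is nearly convex, proper if $\operatorname{dom}g=\{g<\infty\}\neq\emptyset$ and $g>-\infty$. Fenchel conjugate: $g^*(v)=\sup_y\{\langle v,y\rangle-g(y)\}$. *)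

From HB Require Import structures.
From mathcomp Require Import all_boot all_order all_algebra.
From mathcomp Require Import all_classical all_reals all_analysis.
Set Implicit Arguments. Unset Strict Implicit. Unset Printing Implicit Defensive.
Import Order.TTheory GRing.Theory Num.Theory.
Import numFieldNormedType.Exports.
Local Open Scope classical_set_scope.
Local Open Scope ring_scope.

Definition dotv (R : realType) (p : nat) (v y : 'cV[R]_p) : R :=
  \sum_(i < p) v i 0 * y i 0.

Definition eball (R : realType) (p : nat) (a : 'cV[R]_p) (d : R) : set 'cV[R]_p :=
  [set x | \sum_(i < p) (x i 0 - a i 0) ^+ 2 < d ^+ 2].

Definition aff (R : realType) (p : nat) (S : set 'cV[R]_p) : set 'cV[R]_p :=
  [set x | exists (k : nat) (pt : 'I_k -> 'cV[R]_p) (c : 'I_k -> R),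
     (forall i, S (pt i)) /\ \sum_(i < k) c i = 1 /\ x = \sum_(i < k) c i *: pt i].

Definition ri (R : realType) (p : nat) (S : set 'cV[R]_p) : set 'cV[R]_p :=
  [set a | S a /\ exists d : R, 0 < d /\ eball a d `&` aff S `<=` S].

Definition convex_set2 (R : realType) (p : nat) (C : set ('cV[R]_p * R)) : Prop :=
  forall y1 t1 y2 t2 (l : R), C (y1, t1) -> C (y2, t2) -> 0 <= l <= 1 ->
    C (l *: y1 + (1 - l) *: y2, l * t1 + (1 - l) * t2).

Definition nearly_convex_set2 (R : realType) (p : nat) (O : set ('cV[R]_p * R)) : Prop :=
  exists C, convex_set2 C /\ C `<=` O /\ O `<=` closure C.

Definition epigraph (R : realType) (p : nat) (g : 'cV[R]_p -> \bar R) : set ('cV[R]_p * R) :=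
  [set yt | (g yt.1 <= yt.2%:E)%E].

Definition nearly_convex_fun (R : realType) (p : nat) (g : 'cV[R]_p -> \bar R) : Prop :=
  nearly_convex_set2 (epigraph g).

Definition edom (R : realType) (p : nat) (g : 'cV[R]_p -> \bar R) : set 'cV[R]_p :=
  [set y | (g y < +oo)%E].

Definition proper_fun (R : realType) (p : nat) (g : 'cV[R]_p -> \bar R) : Prop :=
  edom g !=set0 /\ forall y, (-oo < g y)%E.

Definition fconj (R : realType) (p : nat) (g : 'cV[R]_p -> \bar R) (v : 'cV[R]_p) : \bar R :=
  ereal_sup [set ((dotv v y)%:E - g y)%E | y in [set: 'cV[R]_p]].

From HB Require Import structures.
From mathcomp Require Import all_boot all_order all_algebra.
From mathcomp Require Import all_classical all_reals all_analysis.
From mathcomp Require Import lra ring.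
Import Order.TTheory GRing.Theory Num.Theory.
Import numFieldNormedType.Exports.
Set Implicit Arguments. Unset Strict Implicit. Unset Printing Implicit Defensive.
Local Open Scope classical_set_scope.
Local Open Scope ring_scope.

(* Weak duality (fconj_comp_le) gives (g o A)^*(w) <= g^*(v) whenever A^T v = w,
   which settles the case +oo; the value -oo is excluded because g(A x0) is
   finite for the point A x0 of ri(dom g).  The substance is the finite case
   (g o A)^*(w) = alpha, where we must find v with A^T v = w and g^*(v) <= alpha. *)

Section InnerProduct.
Variables (R : realType) (k : nat).
Implicit Types (u y z : 'cV[R]_k).

Lemma dotvE u y : dotv u y = (u^T *m y) 0 0.
Proof. by rewrite /dotv mxE; apply: eq_bigr => i _; rewrite mxE. Qed.

Lemma dotvDr u y z : dotv u (y + z) = dotv u y + dotv u z.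
Proof. by rewrite /dotv -big_split; apply: eq_bigr => i _; rewrite mxE mulrDr. Qed.

Lemma dotvZr u y (l : R) : dotv u (l *: y) = l * dotv u y.
Proof. by rewrite /dotv mulr_sumr; apply: eq_bigr => i _; rewrite mxE mulrCA. Qed.

Lemma dotvBr u y z : dotv u (y - z) = dotv u y - dotv u z.
Proof. by rewrite dotvDr -scaleN1r dotvZr mulN1r. Qed.

Lemma dotv0r u : dotv u 0 = 0.
Proof. by rewrite -(scale0r 0) dotvZr mul0r. Qed.

Lemma dotvBl u y z : dotv (u - y) z = dotv u z - dotv y z.
Proof. by rewrite /dotv -sumrB; apply: eq_bigr => i _; rewrite !mxE mulrBl. Qed.

Lemma dotv_self0 u : dotv u u <= 0 -> u = 0.
Proof.
move=> h; have hs i : 0 <= u i 0 * u i 0 by rewrite -expr2 sqr_ge0.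
have h0 : dotv u u = 0.
  by apply/eqP; rewrite eq_le h /=; apply: sumr_ge0 => i _; exact: hs.
apply/matrixP => i j; rewrite (ord1 j) mxE.
have := @psumr_eq0P R _ xpredT (fun i => u i 0 * u i 0) (fun i _ => hs i) h0 i isT.
by move/eqP; rewrite mulf_eq0 orbb => /eqP.
Qed.

Lemma dotv_bounded0 u (K : R) : (forall y, dotv u y <= K) -> u = 0.
Proof.
move=> hK; apply: dotv_self0; rewrite leNgt; apply/negP => up.
have := hK (((`|K| + 1) / dotv u u) *: u).
rewrite dotvZr divfK ?gt_eqF //.
by have := ler_norm K; lra.
Qed.

End InnerProduct.

Lemma dotv_tr (R : realType) (p n : nat) (A : 'M[R]_(p, n)) v x :
  dotv (A^T *m v) x = dotv v (A *m x).
Proof. by rewrite !dotvE trmx_mul trmxK mulmxA. Qed.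

Lemma mulmx_comb (R : realType) (a b c : nat) (X : 'M[R]_(a, b)) (y z : 'M[R]_(b, c)) (l : R) :
  X *m (l *: y + (1 - l) *: z) = l *: (X *m y) + (1 - l) *: (X *m z).
Proof. by rewrite mulmxDr -!scalemxAr. Qed.

Definition mxnorm1 (R : realType) (a b : nat) (X : 'M[R]_(a, b)) : R :=
  \sum_i \sum_j `|X i j|.

Lemma mxnorm1_ge0 (R : realType) (a b : nat) (X : 'M[R]_(a, b)) : 0 <= mxnorm1 X.
Proof. by apply: sumr_ge0 => i _; apply: sumr_ge0 => j _; exact: normr_ge0. Qed.

Lemma mxnorm1_bound (R : realType) (a b : nat) {X : 'M[R]_(a, b)} {e : 'cV[R]_b} {eta : R} :
  0 <= eta -> (forall j, `|e j 0| <= eta) ->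
  forall i, `|(X *m e) i 0| <= mxnorm1 X * eta.
Proof.
move=> eta0 he i; rewrite mxE; apply: le_trans (ler_norm_sum _ _ _) _.
apply: le_trans (_ : \sum_j `|X i j| * eta <= _).
  by apply: ler_sum => j _; rewrite normrM ler_wpM2l.
rewrite -mulr_suml ler_wpM2r // /mxnorm1 (bigD1 i) //= lerDl.
by apply: sumr_ge0 => k _; apply: sumr_ge0 => j _; exact: normr_ge0.
Qed.

(* A convex set of R^m that is dense in the open box of radius r contains the
   closed box of radius r/2.  We prove it for boxes of the coordinate subspaces
   spanned by the first k basis vectors, by induction on k: the points above and
   below the slab |z_k| <= r/2 project to convex sets dense in the k-dimensional
   box, so both contain the smaller box, and z is a convex combination of them. *)
Section ConvexDenseBox.
Variables (R : realType) (m : nat).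
Implicit Types (z : 'cV[R]_m) (D : set 'cV[R]_m).

Definition convex_cV D := forall z1 z2 (l : R), D z1 -> D z2 -> 0 <= l <= 1 ->
  D (l *: z1 + (1 - l) *: z2).

Definition supported k z := forall i : 'I_m, (k <= i)%N -> z i 0 = 0.

Definition dense_in_box k (r : R) D := forall z, supported k z ->
  (forall i : 'I_m, (i < k)%N -> `|z i 0| < r) -> forall eps, 0 < eps ->
  exists z', D z' /\ supported k z' /\
    forall i : 'I_m, (i < k)%N -> `|z' i 0 - z i 0| < eps.

Lemma add_delta_entry z (c : R) (ko i : 'I_m) :
  (z + c *: delta_mx ko 0) i 0 = z i 0 + (if i == ko then c else 0).
Proof. by rewrite !mxE eqxx andbT; case: eqP => _; rewrite ?mulr1 ?mulr0. Qed.

Section Slice.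
Variables (k : nat) (hk : (k < m)%N).
Local Notation ko := (Ordinal hk).
Local Notation ek := (delta_mx ko 0 : 'cV[R]_m).

Lemma lt_ord_neq (i : 'I_m) : (i < k)%N -> i != ko.
Proof. by move=> hi; apply/eqP => ei; move: hi; rewrite ei /= ltnn. Qed.

Lemma supported_drop z : supported k.+1 z -> supported k (z - z ko 0 *: ek).
Proof.
move=> sz i hi; rewrite -scaleNr add_delta_entry; case: eqP => [->|ne].
  by rewrite subrr.
rewrite addr0 sz //; rewrite leq_eqVlt in hi; case/orP: hi => // /eqP ei.
by exfalso; apply: ne; apply: val_inj.
Qed.

Definition slice (sgn r : R) D :=
  [set z | supported k z /\ exists c, r / 2 < sgn * c /\ D (z + c *: ek)].

Lemma slice_convex sgn r D : convex_cV D -> convex_cV (slice sgn r D).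
Proof.
move=> cD z1 z2 l [s1 [c1 [h1 D1]]] [s2 [c2 [h2 D2]]] hl; split.
  by move=> i hi; rewrite !mxE s1 // s2 // !mulr0 addr0.
exists (l * c1 + (1 - l) * c2); split.
  case/andP: hl => l0 l1; rewrite mulrDr !mulrA (mulrC sgn) (mulrC sgn) -!mulrA.
  have ha : 0 <= l * (sgn * c1 - r / 2) by apply: mulr_ge0 => //; lra.
  have hb : 0 <= (1 - l) * (sgn * c2 - r / 2) by apply: mulr_ge0 => //; lra.
  have [lp|l0'] := ltP 0 l.
    have : 0 < l * (sgn * c1 - r / 2) by apply: mulr_gt0 => //; lra.
    lra.
  have -> : l = 0 by apply/eqP; rewrite eq_le l0' l0.
  lra.
have := cD _ _ l D1 D2 hl.
by congr D; apply/matrixP => i j; rewrite !mxE; ring.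
Qed.

(* Density in the (k+1)-box passes to the slices: approximate a point pushed to
   height 3r/4 on the chosen side and project the approximation. *)
Lemma slice_dense sgn r D : (sgn = 1 \/ sgn = -1) -> 0 < r ->
  dense_in_box k.+1 r D -> dense_in_box k r (slice sgn r D).
Proof.
move=> hsg r0 dD z sz bz eps e0.
have nsg : `|sgn| = 1 by case: hsg => ->; rewrite ?normrN normr1.
pose eps' := Num.min eps (r / 4).
have e'0 : 0 < eps' by rewrite lt_min e0 /=; lra.
pose zz := z + (sgn * (3 * r / 4)) *: ek.
have szz : supported k.+1 zz.
  move=> i hi; rewrite add_delta_entry sz ?(leq_trans _ hi) //.
  by case: eqP => [ei|]; [move: hi; rewrite ei /= ltnn|rewrite addr0].
have bzz : forall i : 'I_m, (i < k.+1)%N -> `|zz i 0| < r.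
  move=> i hi; rewrite add_delta_entry; case: eqP => [->|ne].
    by rewrite sz //= add0r normrM nsg mul1r ger0_norm; lra.
  rewrite addr0 bz //; rewrite ltnS leq_eqVlt in hi; case/orP: hi => // /eqP ei.
  by exfalso; apply: ne; apply: val_inj.
have [z' [Dz' [sz' cz']]] := dD zz szz bzz eps' e'0.
exists (z' - z' ko 0 *: ek); split; last split.
- split; first exact: supported_drop.
  exists (z' ko 0); split; last by rewrite subrK.
  have h := cz' ko (ltnSn k); rewrite add_delta_entry eqxx sz //= add0r in h.
  have he : eps' <= r / 4 by rewrite ge_min lexx orbT.
  move: h; rewrite ltr_norml => /andP [h1 h2].
  by case: hsg h1 h2 => -> h1 h2; rewrite ?mul1r ?mulN1r in h1 h2 *; lra.
- exact: supported_drop.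
- move=> i hi; have h := cz' i (ltnW hi).
  have he : eps' <= eps by rewrite ge_min lexx.
  rewrite -scaleNr add_delta_entry add_delta_entry (negbTE (lt_ord_neq hi)) !addr0 in h *.
  lra.
Qed.

End Slice.

Lemma convex_line_fill D z (ko : 'I_m) c1 c2 : convex_cV D ->
  c2 <= z ko 0 <= c1 -> c2 < c1 ->
  D (z - z ko 0 *: delta_mx ko 0 + c1 *: delta_mx ko 0) ->
  D (z - z ko 0 *: delta_mx ko 0 + c2 *: delta_mx ko 0) -> D z.
Proof.
move=> cD /andP [hc2 hc1] c12 D1 D2.
pose l := (z ko 0 - c2) / (c1 - c2).
have hl : 0 <= l <= 1.
  apply/andP; split; first by apply: divr_ge0; lra.
  by rewrite ler_pdivrMr ?subr_gt0 // mul1r; lra.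
have El : l * c1 + (1 - l) * c2 = z ko 0 by rewrite /l; field; lra.
have := cD _ _ l D1 D2 hl.
congr D; apply/matrixP => i j; rewrite (ord1 j) !mxE eqxx andbT.
transitivity (z i 0 + (i == ko)%:R * (l * c1 + (1 - l) * c2 - z ko 0)); first by ring.
by rewrite El subrr mulr0 addr0.
Qed.

Lemma convex_dense_box k : (k <= m)%N -> forall (r : R) D, 0 < r ->
  convex_cV D -> dense_in_box k r D ->
  forall z, supported k z -> (forall i : 'I_m, (i < k)%N -> `|z i 0| <= r / 2) -> D z.
Proof.
elim: k => [_|k IH hk] r D r0 cD dD z sz bz.
  have [z' [Dz' [sz' _]]] :=
    dD z sz (fun i (hi : (i < 0)%N) => False_ind _ (notF hi)) 1 ltr01.
  suff -> : z = z' by [].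
  by apply/matrixP => i j; rewrite (ord1 j) sz // sz'.
have b0 : forall i : 'I_m, (i < k)%N ->
    `|(z - z (Ordinal hk) 0 *: delta_mx (Ordinal hk) 0) i 0| <= r / 2.
  move=> i hi; rewrite -scaleNr add_delta_entry (negbTE (lt_ord_neq hk hi)) addr0.
  exact: bz (ltnW hi).
have side sgn : (sgn = 1 \/ sgn = -1) ->
    slice hk sgn r D (z - z (Ordinal hk) 0 *: delta_mx (Ordinal hk) 0).
  move=> hsg; apply: (IH (ltnW hk) r (slice hk sgn r D) r0).
  - exact: slice_convex.
  - exact: slice_dense.
  - exact: supported_drop.
  - exact: b0.
have [_ [c1 [h1 D1]]] := side 1 (or_introl erefl).
have [_ [c2 [h2 D2]]] := side (-1) (or_intror erefl).
rewrite mul1r in h1; rewrite mulN1r in h2.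
move: (bz (Ordinal hk) (ltnSn k)); rewrite ler_norml => /andP [bk1 bk2].
by apply: (convex_line_fill cD _ _ D1 D2); [apply/andP; split|]; lra.
Qed.

End ConvexDenseBox.

(* Replacing q by x |-> inf_c q(x + c e) - c q(e) yields a
   smaller sublinear function that is additive along e and keeps the additivity
   already obtained along other directions; doing this for every basis vector
   produces a linear function below q. *)
Section SublinearMinorant.
Variables (R : realType) (M : nat).
Implicit Types (q : 'cV[R]_M -> R) (x y e : 'cV[R]_M).

Definition sublin q := (forall x y, q (x + y) <= q x + q y) /\
  (forall (l : R) x, 0 < l -> q (l *: x) <= l * q x).

Lemma sublin0 q : sublin q -> 0 <= q 0.
Proof. by move=> [sa _]; have := sa 0 0; rewrite addr0; lra. Qed.

Lemma sublin_homE q l x : sublin q -> 0 < l -> q (l *: x) = l * q x.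
Proof.
move=> [sa hm] l0; apply/eqP; rewrite eq_le hm //=.
have li : 0 < l^-1 by rewrite invr_gt0.
have := hm l^-1 (l *: x) li; rewrite scalerA mulVf ?gt_eqF // scale1r => h.
by rewrite -(ler_pM2l li) mulrA mulVf ?gt_eqF // mul1r.
Qed.

Lemma sublin_line q e c : sublin q -> c * q e <= q (c *: e).
Proof.
move=> sq; have [c0|c0|->] := ltrgtP c 0; last by rewrite mul0r scale0r sublin0.
- have nc : 0 < - c by rewrite oppr_gt0.
  have := sq.1 (c *: e) ((- c) *: e).
  rewrite -scalerDl subrr scale0r (sublin_homE e sq nc).
  by have := sublin0 sq; lra.
- by rewrite sublin_homE.
Qed.

Definition flatten q e x := inf [set q (x + c *: e) - c * q e | c in [set: R]].

Lemma flatten_lb q e x : sublin q ->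
  has_lbound [set q (x + c *: e) - c * q e | c in [set: R]].
Proof.
move=> sq; exists (- q (- x)) => _ [c _ <-].
have h := sq.1 (x + c *: e) (- x); rewrite addrC addKr in h.
by have := sublin_line e c sq; lra.
Qed.

Lemma flatten_ne q e x : [set q (x + c *: e) - c * q e | c in [set: R]] !=set0.
Proof. by exists (q (x + 0 *: e) - 0 * q e); exists 0. Qed.

Lemma flatten_le q e x c : sublin q -> flatten q e x <= q (x + c *: e) - c * q e.
Proof. by move=> sq; apply: (ge_inf (flatten_lb e x sq)); exists c. Qed.

Lemma flatten_le_self q e x : sublin q -> flatten q e x <= q x.
Proof.
by move=> sq; have := flatten_le e x 0 sq; rewrite scale0r addr0 mul0r subr0.
Qed.

Lemma flatten_cmp q e x' x d : sublin q ->
  (forall c, exists c', q (x' + c' *: e) - c' * q e <= q (x + c *: e) - c * q e + d) ->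
  flatten q e x' <= flatten q e x + d.
Proof.
move=> sq H; rewrite -lerBlDr; apply: lb_le_inf; first exact: flatten_ne.
move=> _ [c _ <-]; have [c' Hc'] := H c; have := flatten_le e x' c' sq; lra.
Qed.

Lemma flatten_sublin q e : sublin q -> sublin (flatten q e).
Proof.
move=> sq; split.
- move=> x y; rewrite -lerBlDr; apply: lb_le_inf; first exact: flatten_ne.
  move=> _ [c1 _ <-]; rewrite lerBlDr -lerBlDl.
  apply: lb_le_inf; first exact: flatten_ne.
  move=> _ [c2 _ <-]; rewrite lerBlDr.
  have := flatten_le e (x + y) (c1 + c2) sq.
  have := sq.1 (x + c1 *: e) (y + c2 *: e).
  have -> : x + c1 *: e + (y + c2 *: e) = x + y + (c1 + c2) *: e.
    by rewrite scalerDl addrACA.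
  lra.
- move=> l x l0; rewrite mulrC -ler_pdivrMr //; apply: lb_le_inf; first exact: flatten_ne.
  move=> _ [c _ <-]; rewrite ler_pdivrMr // mulrC.
  have := flatten_le e (l *: x) (l * c) sq.
  have := sublin_homE (x + c *: e) sq l0.
  rewrite scalerDr scalerA => ->; rewrite mulrBr mulrA; lra.
Qed.

Lemma flatten_along q e x s : sublin q ->
  flatten q e (x + s *: e) = flatten q e x + s * q e.
Proof.
move=> sq; apply/eqP; rewrite eq_le; apply/andP; split.
- apply: flatten_cmp => // c; exists (c - s).
  by rewrite -addrA -scalerDl (addrC s) subrK mulrBl; lra.
- rewrite -lerBrDr; apply: flatten_cmp => // c; exists (c + s).
  by rewrite -(addrA x) -scalerDl (addrC s) mulrDl; lra.
Qed.

Lemma flatten_keeps q e e' a x s : sublin q ->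
  (forall x s, q (x + s *: e') = q x + s * a) ->
  flatten q e (x + s *: e') = flatten q e x + s * a.
Proof.
move=> sq H; apply/eqP; rewrite eq_le; apply/andP; split.
- apply: flatten_cmp => // c; exists c.
  by rewrite -addrA (addrC (s *: e')) addrA H; lra.
- rewrite -lerBrDr; apply: flatten_cmp => // c; exists c.
  have := H (x + s *: e' + c *: e) (- s).
  have -> : x + s *: e' + c *: e + - s *: e' = x + c *: e.
    by rewrite scaleNr addrAC addrK.
  lra.
Qed.

Lemma flatten_coords q : sublin q -> forall j, (j <= M)%N -> exists qj, sublin qj /\
  (forall x, qj x <= q x) /\ exists a : 'cV[R]_M, forall i : 'I_M, (i < j)%N ->
  forall x s, qj (x + s *: delta_mx i 0) = qj x + s * a i 0.
Proof.
move=> sq; elim=> [_|j IH hj].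
  by exists q; split => //; split => //; exists 0 => i.
have [qj [sj [lej [a Ha]]]] := IH (ltnW hj).
pose jo := Ordinal hj.
exists (flatten qj (delta_mx jo 0)); split; first exact: flatten_sublin.
split; first by move=> x; apply: le_trans (lej x); exact: flatten_le_self.
exists (\col_i (if i == jo then qj (delta_mx jo 0) else a i 0)) => i hi x s.
rewrite mxE; case: eqP => [->|neq]; first exact: flatten_along.
apply: flatten_keeps => //; apply: Ha.
rewrite ltnS leq_eqVlt in hi; case/orP: hi => // /eqP hi.
by exfalso; apply: neq; apply: val_inj.
Qed.

Lemma sublinear_minorant q : sublin q -> exists a : 'cV[R]_M, forall x, dotv a x <= q x.
Proof.
move=> sq; have [qM [sM [leM [a Ha]]]] := flatten_coords sq (leqnn M).
exists a => x.
have Hs : forall (s : seq 'I_M) y, qM (\sum_(i <- s) x i 0 *: delta_mx i 0 + y) =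
    qM y + \sum_(i <- s) x i 0 * a i 0.
  elim=> [|i s IHs] y; first by rewrite !big_nil add0r addr0.
  by rewrite !big_cons -addrA addrC Ha // IHs; lra.
have Hx : x = \sum_(i < M) x i 0 *: delta_mx i 0.
  by rewrite {1}(matrix_sum_delta x); apply: eq_bigr => i _; rewrite big_ord1.
have := Hs (index_enum 'I_M) 0; rewrite addr0 -Hx => Hq.
have : dotv a x = \sum_(i <- index_enum 'I_M) x i 0 * a i 0.
  by apply: eq_bigr => i _; rewrite mulrC.
by have := sublin0 sM; have := leM x; lra.
Qed.

End SublinearMinorant.

(* Finitely many vectors y - a0 with y in S whose span (as rows of B) contains
   every y - a0 with y in S: take such a family of maximal rank. *)
Lemma affine_spanning_rows (R : realType) (p : nat) (S : set 'cV[R]_p) (a0 : 'cV[R]_p) :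
  exists m (B : 'M[R]_(m, p)),
    (forall i : 'I_m, exists y, S y /\ row i B = (y - a0)^T) /\
    forall y, S y -> ((y - a0)^T <= B)%MS.
Proof.
pose P n := exists m (B : 'M[R]_(m, p)),
  (forall i : 'I_m, exists y, S y /\ row i B = (y - a0)^T) /\ \rank B = n.
have ex0 : exists n, `[< P n >].
  exists 0%N; apply/asboolP; exists 0%N, 0; split; first by case.
  by rewrite mxrank0.
have ub n : `[< P n >] -> (n <= p)%N.
  by move=> /asboolP [m [B [_ <-]]]; exact: rank_leq_col.
case: (ex_maxnP ex0 ub) => n0 /asboolP [m [B [HB rB]]] Hmax.
exists m, B; split => // y Sy.
pose B' := col_mx B (y - a0)^T.
have HB' i : exists y0, S y0 /\ row i B' = (y0 - a0)^T.
  case: (splitP i) => j hj.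
    have -> : i = lshift 1 j by apply: val_inj.
    by rewrite rowKu; apply: HB.
  have -> : i = rshift m j by apply: val_inj.
  exists y; rewrite rowKd (ord1 j) /row; split => //.
  by apply/matrixP => a b; rewrite !mxE (ord1 a).
have le' : (\rank B' <= n0)%N by apply: Hmax; apply/asboolP; exists (m + 1)%N, B'.
have sub : (B <= B')%MS by rewrite -addsmxE addsmxSl.
have := mxrank_leqif_sup sub; rewrite rB => /leqifP.
case: ifP => [h|_ h]; last by exfalso; move: h; rewrite ltnNge le'.
by move: h; rewrite col_mx_sub => /andP [].
Qed.

Lemma row_coordK (R : realType) (m p : nat) (B : 'M[R]_(m, p)) (e : 'cV[R]_p) :
  (e^T <= B)%MS -> B^T *m ((pinvmx B)^T *m e) = e.
Proof.
move=> /mulmxKpV h.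
transitivity ((e^T *m pinvmx B *m B)^T); last by rewrite h trmxK.
by rewrite (trmx_mul (e^T *m pinvmx B) B) (trmx_mul e^T (pinvmx B)) trmxK.
Qed.

Lemma closure_approx (R : realType) (p : nat) (C : set ('cV[R]_p * R)) y t :
  closure C (y, t) -> forall e, 0 < e -> exists y' t', C (y', t') /\
    (forall i j, `|y' i j - y i j| < e) /\ `|t' - t| < e.
Proof.
move=> cl e e0.
have box : nbhs (y, t) [set z : 'cV[R]_p * R |
    (forall i j, `|z.1 i j - y i j| < e) /\ `|z.2 - t| < e].
  apply/nbhs_ballP; exists e => //= -[z1 z2] [/= [_ H1] H2]; split.
    by move=> i j; have := H1 i j; rewrite /ball /= distrC.
  by move: H2; rewrite /ball /= distrC.
by have [[y' t'] [Cz [H1 H2]]] := cl _ box; exists y', t'.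
Qed.

Lemma closure_halfspace (R : realType) (p : nat) (C : set ('cV[R]_p * R))
    (v : 'cV[R]_p) (alpha : R) :
  (forall y t, C (y, t) -> dotv v y <= t + alpha) ->
  forall y t, closure C (y, t) -> dotv v y <= t + alpha.
Proof.
move=> hC y t /closure_approx cl; rewrite leNgt; apply/negP => hlt.
pose N := mxnorm1 v^T.
have N0 : 0 <= N := mxnorm1_ge0 _.
pose eta := (dotv v y - (t + alpha)) / 2.
have eta0 : 0 < eta by rewrite divr_gt0 // subr_gt0.
have e0 : 0 < eta / (N + 1) by rewrite divr_gt0 //; lra.
have [y' [t' [Ct [hy ht]]]] := cl _ e0.
have hd : `|dotv v y' - dotv v y| <= N * (eta / (N + 1)).
  rewrite -dotvBr dotvE; apply: (mxnorm1_bound (X := v^T) (ltW e0) _ 0) => j.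
  by rewrite !mxE; apply: ltW; apply: hy.
have h1 : N * (eta / (N + 1)) <= eta.
  rewrite mulrCA -[X in _ <= X]mulr1; apply: ler_wpM2l; first exact: ltW.
  by rewrite ler_pdivrMr; lra.
have h2 : eta / (N + 1) <= eta by rewrite ler_pdivrMr; [nra|lra].
have eE : 2 * eta = dotv v y - (t + alpha) by rewrite /eta; field.
have := hC _ _ Ct; move: hd ht; rewrite ler_norml ltr_norml => /andP [a1 a2] /andP [b1 b2].
by clearbody eta N; lra.
Qed.

Lemma edom_fineK (R : realType) (p : nat) (g : 'cV[R]_p -> \bar R) y :
  (forall y, (-oo < g y)%E) -> edom g y -> g y = (fine (g y))%:E.
Proof.
move=> gfin h; rewrite fineK // fin_numE; apply/andP; split.
  by rewrite gt_eqF // gfin.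
by rewrite lt_eqF.
Qed.

Section FiniteConjugate.
Variables (R : realType) (p n : nat) (g : 'cV[R]_p -> \bar R) (A : 'M[R]_(p, n)).
Variables (w : 'cV[R]_n) (alpha : R) (C : set ('cV[R]_p * R)) (x0 : 'cV[R]_n) (d : R).
Hypothesis g_gtNy : forall y, (-oo < g y)%E.
Hypothesis C_convex : convex_set2 C.
Hypothesis C_epi : C `<=` epigraph g.
Hypothesis epi_C : epigraph g `<=` closure C.
Hypothesis a0_dom : edom g (A *m x0).
Hypothesis d_gt0 : 0 < d.
Hypothesis a0_ri : eball (A *m x0) d `&` aff (edom g) `<=` edom g.
Hypothesis alpha_ub : forall x, ((dotv w x)%:E - g (A *m x) <= alpha%:E)%E.

Let a0 := A *m x0.

Let D := [set y | exists t, C (y, t)].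

Lemma D_dom : D `<=` edom g.
Proof.
move=> y [t /C_epi]; rewrite /epigraph /edom /= => h.
by apply: le_lt_trans h _; rewrite ltry.
Qed.

Lemma D_convex y1 y2 l : D y1 -> D y2 -> 0 <= l <= 1 -> D (l *: y1 + (1 - l) *: y2).
Proof. by move=> [t1 h1] [t2 h2] hl; exists (l * t1 + (1 - l) * t2); exact: C_convex. Qed.

Lemma dom_approx_D y : edom g y -> forall e, 0 < e ->
  exists y', D y' /\ forall i j, `|y' i j - y i j| < e.
Proof.
move=> dy e e0.
have : epigraph g (y, fine (g y)) by rewrite /epigraph /= -edom_fineK.
move/epi_C/closure_approx => /(_ e e0) [y' [t' [Cy [H1 _]]]].
by exists y'; split => //; exists t'.
Qed.

Lemma C_range_bound y t x : C (y, t) -> y = A *m x -> dotv w x - alpha <= t.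
Proof.
move=> Cy hy; have dy : edom g y by apply: D_dom; exists t.
have hg := C_epi Cy; rewrite /epigraph /= in hg.
have := alpha_ub x; rewrite -hy (edom_fineK g_gtNy dy) in hg *.
by rewrite -EFinB !lee_fin in hg *; lra.
Qed.

(* Coordinates on aff(dom g): the rows of B are differences y - a0, y in dom g,
   spanning all such differences, and Phi z = a0 + B^T z. *)
Section AffineCoordinates.
Variables (m : nat) (B : 'M[R]_(m, p)).
Hypothesis B_rows : forall i : 'I_m, exists y, edom g y /\ row i B = (y - a0)^T.
Hypothesis B_span : forall y, edom g y -> ((y - a0)^T <= B)%MS.

Let Phi (z : 'cV[R]_m) := a0 + B^T *m z.

(* Phi z is an affine combination of a0 and the points y of dom g defining
   the rows of B. *)
Lemma Phi_aff z : aff (edom g) (Phi z).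
Proof.
have [yf Hyf] := boolp.choice B_rows.
have Bij i j : B i j = yf i j 0 - a0 j 0.
  by have := (Hyf i).2; move/matrixP => /(_ 0 j); rewrite !mxE.
exists m.+1.
exists (fun i => if unlift ord0 i is Some j then yf j else a0).
exists (fun i => if unlift ord0 i is Some j then z j 0 else 1 - \sum_j z j 0).
split; first by move=> i; case: unlift => [j|]; [exact: (Hyf j).1|exact: a0_dom].
split.
  rewrite big_ord_recl unlift_none; under [X in _ + X = _]eq_bigr do rewrite liftK.
  by rewrite subrK.
rewrite /Phi; clearbody a0.
apply/matrixP => j k; rewrite (ord1 k) summxE big_ord_recl unlift_none.
under [X in _ = _ + X]eq_bigr do rewrite liftK.
rewrite !mxE.
have E1 : \sum_j0 B^T j j0 * z j0 0 = \sum_i z i 0 * yf i j 0 - (\sum_i z i 0) * a0 j 0.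
  by rewrite mulr_suml -sumrB; apply: eq_bigr => i _; rewrite mxE Bij; ring.
have E2 : \sum_i (z i 0 *: yf i) j 0 = \sum_i z i 0 * yf i j 0.
  by apply: eq_bigr => i _; rewrite mxE.
by rewrite E1 E2; ring.
Qed.

(* Radius of a coordinate box mapped by Phi into the ball B(a0; d). *)
Let r := d / ((p%:R + 1) * (mxnorm1 B^T + 1)).

Lemma r_gt0 : 0 < r.
Proof.
have := mxnorm1_ge0 B^T; have : (0 <= p%:R :> R) by [].
by move=> *; rewrite /r divr_gt0 // mulr_gt0 //; lra.
Qed.

Lemma Phi_ball (z : 'cV[R]_m) : (forall i, `|z i 0| < r) -> eball a0 d (Phi z).
Proof.
move=> hz; rewrite /eball /=.
set beta := mxnorm1 B^T * r.
have hb i : ((Phi z) i 0 - a0 i 0) ^+ 2 <= beta ^+ 2.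
  have -> : (Phi z) i 0 - a0 i 0 = (B^T *m z) i 0.
    by rewrite /Phi [X in X - _]mxE addrAC subrr add0r.
  have := mxnorm1_bound (X := B^T) (ltW r_gt0) (fun j => ltW (hz j)) i.
  by rewrite -/beta ler_norml => /andP [h1 h2]; nra.
apply: le_lt_trans (ler_sum _ (fun i _ => hb i)) _.
rewrite sumr_const card_ord -mulr_natr.
have P0 : (0 <= p%:R :> R) by [].
have S0 := mxnorm1_ge0 B^T.
have beta0 : 0 <= beta by rewrite mulr_ge0 // ltW // r_gt0.
have hbd : beta * (p%:R + 1) <= d.
  have -> : beta * (p%:R + 1) = d * (mxnorm1 B^T / (mxnorm1 B^T + 1)).
    by rewrite /beta /r; field; apply/andP; split; apply/eqP; lra.
  by rewrite ler_piMr ?ltW // ltr_pdivrMr; lra.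
have sq : (beta * (p%:R + 1)) ^+ 2 <= d ^+ 2.
  have : 0 <= beta * (p%:R + 1) by apply: mulr_ge0 => //; lra.
  nra.
have [->|bp] := eqVneq beta 0; first by rewrite expr0n /= mul0r exprn_gt0.
have b2 : 0 < beta ^+ 2 by rewrite exprn_gt0 // lt_def bp beta0.
have : beta ^+ 2 * p%:R < beta ^+ 2 * (p%:R + 1) ^+ 2 by rewrite ltr_pM2l //; nra.
by rewrite exprMn in sq; lra.
Qed.

Let Dz := [set z : 'cV[R]_m | D (Phi z)].

Lemma Dz_convex : convex_cV Dz.
Proof.
move=> z1 z2 l h1 h2 hl; rewrite /Dz /=.
have -> : Phi (l *: z1 + (1 - l) *: z2) = l *: Phi z1 + (1 - l) *: Phi z2.
  rewrite /Phi mulmx_comb !scalerDr addrACA -scalerDl.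
  by rewrite (_ : l + (1 - l) = 1) ?scale1r //; ring.
exact: D_convex.
Qed.

(* Since a0 is in ri(dom g), the r-box is mapped into dom g, in which D is dense;
   the coordinates of approximating points are recovered with pinvmx. *)
Lemma Dz_dense : dense_in_box m r Dz.
Proof.
move=> z0 _ hz eps e0.
have dz : edom g (Phi z0).
  by apply: a0_ri; split; [apply: Phi_ball => i; apply: hz|exact: Phi_aff].
pose Q := (pinvmx B)^T.
have Q0 := mxnorm1_ge0 Q.
have eta0 : 0 < eps / (mxnorm1 Q + 1) by rewrite divr_gt0 //; lra.
have [y' [Dy' hy']] := dom_approx_D dz eta0.
pose e := y' - Phi z0.
have he : (e^T <= B)%MS.
  have -> : e = (y' - a0) + B^T *m (- z0) by rewrite /e /Phi mulmxN opprD addrA.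
  rewrite linearD /=; apply: addmx_sub; first by apply: B_span; exact: D_dom.
  by rewrite trmx_mul trmxK submxMl.
exists (z0 + Q *m e); split; last split.
- by rewrite /Dz /= /Phi mulmxDr addrA row_coordK // /e /Phi addrC subrK.
- by move=> i; rewrite leqNgt ltn_ord.
- move=> i _; rewrite [X in X - _]mxE addrAC subrr add0r.
  apply: le_lt_trans (mxnorm1_bound (X := Q) (e := e) (ltW eta0) _ i) _.
    move=> j; apply: ltW.
    by rewrite (_ : e j 0 = y' j 0 - Phi z0 j 0) ?hy' // /e !mxE.
  have -> : mxnorm1 Q * (eps / (mxnorm1 Q + 1)) = eps * (mxnorm1 Q / (mxnorm1 Q + 1)).
    by field; lra.
  by rewrite gtr_pMr // ltr_pdivrMr; lra.
Qed.

Lemma D_box (z : 'cV[R]_m) : (forall i, `|z i 0| <= r / 2) -> D (Phi z).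
Proof.
move=> hz; apply: (convex_dense_box (leqnn m) r_gt0 Dz_convex Dz_dense).
  by move=> i; rewrite leqNgt ltn_ord.
by move=> i _; apply: hz.
Qed.

Let Psi : 'M[R]_(p, m + n) := row_mx B^T A.
Let G (u : 'cV[R]_(m + n)) (s : R) :=
  exists x t, C (A *m x + Psi *m u, t) /\ t - dotv w x <= s.

Lemma G_convex u1 s1 u2 s2 l : G u1 s1 -> G u2 s2 -> 0 <= l <= 1 ->
  G (l *: u1 + (1 - l) *: u2) (l * s1 + (1 - l) * s2).
Proof.
move=> [x1 [t1 [C1 h1]]] [x2 [t2 [C2 h2]]] hl.
exists (l *: x1 + (1 - l) *: x2), (l * t1 + (1 - l) * t2); split.
  have := C_convex C1 C2 hl; congr C; congr pair.
  by rewrite !mulmx_comb !scalerDr addrACA.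
rewrite dotvDr !dotvZr; case/andP: hl => l0 l1.
have e1 : 0 <= l * (s1 - (t1 - dotv w x1)) by apply: mulr_ge0; lra.
have e2 : 0 <= (1 - l) * (s2 - (t2 - dotv w x2)) by apply: mulr_ge0; lra.
lra.
Qed.

Lemma G_at0 s : G 0 s -> - alpha <= s.
Proof.
move=> [x [t [Ct h]]]; rewrite mulmx0 addr0 in Ct.
by have := C_range_bound Ct (erefl _); lra.
Qed.

(* Every ray from the origin meets the projection of G: its B-part can be
   shrunk into the box of D_box and its A-part absorbed by moving x. *)
Lemma G_ray u : exists tau s, 0 < tau /\ G (tau *: u) s.
Proof.
pose u1 := usubmx u; pose u2 := dsubmx u.
pose N1 := \sum_i `|u1 i 0|.
have N10 : 0 <= N1 by apply: sumr_ge0 => i _; exact: normr_ge0.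
pose tau := r / 2 / (N1 + 1).
have tau0 : 0 < tau.
  by rewrite /tau; apply: divr_gt0; [apply: divr_gt0; [exact: r_gt0|]|lra].
have hb i : `|(tau *: u1) i 0| <= r / 2.
  rewrite mxE normrM gtr0_norm //.
  have ui : `|u1 i 0| <= N1.
    rewrite /N1 (bigD1 i) //= lerDl; apply: sumr_ge0 => k _; exact: normr_ge0.
  have -> : r / 2 = tau * (N1 + 1) by rewrite /tau; field; lra.
  by apply: ler_wpM2l; [exact: ltW|lra].
have [t Ct] := D_box hb.
exists tau, (t - dotv w (x0 - tau *: u2)); split => //.
exists (x0 - tau *: u2), t; split => //.
suff -> : A *m (x0 - tau *: u2) + Psi *m (tau *: u) = Phi (tau *: u1) by [].
rewrite /Phi -[u]vsubmxK -scalemxAr mul_row_col -/u1 -/u2 scalerDr.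
rewrite mulmxBr -!scalemxAr.
by rewrite [tau *: (B^T *m u1) + _]addrC addrA subrK.
Qed.

(* The gauge of G shifted by alpha. *)
Let qset (u : 'cV[R]_(m + n)) :=
  [set v | exists tau s, 0 < tau /\ G (tau *: u) s /\ v = (s + alpha) / tau].
Let q u := inf (qset u).

Lemma qset_ne u : qset u !=set0.
Proof. by have [tau [s [t0 h]]] := G_ray u; exists ((s + alpha) / tau), tau, s. Qed.

(* q is bounded below, by combining a point on the ray of u with one on the ray of -u. *)
Lemma qset_lb u : has_lbound (qset u).
Proof.
have [sig [s' [sg0 Gs']]] := G_ray (- u).
exists (- ((s' + alpha) / sig)) => _ [tau [s [t0 [Gs ->]]]].
pose l := sig / (sig + tau).
have hl : 0 <= l <= 1.
  apply/andP; split; first by rewrite /l divr_ge0 //; lra.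
  by rewrite /l ler_pdivrMr; lra.
have := G_convex Gs Gs' hl.
have -> : l *: (tau *: u) + (1 - l) *: (sig *: - u) = 0.
  rewrite !scalerA scalerN -scaleNr -scalerDl.
  have -> : l * tau + - ((1 - l) * sig) = 0 by rewrite /l; field; lra.
  by rewrite scale0r.
move/G_at0.
have -> : l * s + (1 - l) * s' = (sig * s + tau * s') / (sig + tau).
  by rewrite /l; field; lra.
rewrite ler_pdivlMr; last by lra.
move=> h.
have -> : (s + alpha) / tau = (sig * (s + alpha) + tau * (s' + alpha)) / (sig * tau)
    - (s' + alpha) / sig.
  by field; apply/andP; split; apply/eqP; lra.
have : 0 <= (sig * (s + alpha) + tau * (s' + alpha)) / (sig * tau).
  by apply: divr_ge0; [lra|apply: mulr_ge0; lra].
lra.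
Qed.

Lemma q_le u tau s : 0 < tau -> G (tau *: u) s -> q u <= (s + alpha) / tau.
Proof. by move=> t0 h; apply: (ge_inf (qset_lb u)); exists tau, s. Qed.

Lemma q_sublin : sublin q.
Proof.
split.
- move=> x y; rewrite -lerBlDr; apply: lb_le_inf; first exact: qset_ne.
  move=> _ [sig [s1 [sg0 [G1 ->]]]]; rewrite lerBlDr -lerBlDl.
  apply: lb_le_inf; first exact: qset_ne.
  move=> _ [tau [s2 [t0 [G2 ->]]]]; rewrite lerBlDl.
  pose l := tau / (sig + tau).
  have hl : 0 <= l <= 1.
    apply/andP; split; first by rewrite /l divr_ge0 //; lra.
    by rewrite /l ler_pdivrMr; lra.
  have := G_convex G1 G2 hl.
  have -> : l *: (sig *: x) + (1 - l) *: (tau *: y) = (sig * tau / (sig + tau)) *: (x + y).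
    by rewrite !scalerA scalerDr; congr (_ *: _ + _ *: _); rewrite /l; field; lra.
  have rp : 0 < sig * tau / (sig + tau) by apply: divr_gt0; [apply: mulr_gt0|lra].
  move/(q_le rp) => h; apply: le_trans h _; rewrite le_eqVlt; apply/orP; left; apply/eqP.
  by rewrite /l; field; apply/and3P; split; apply/eqP; lra.
- move=> l x l0; rewrite mulrC -ler_pdivrMr //; apply: lb_le_inf; first exact: qset_ne.
  move=> _ [tau [s [t0 [Gs ->]]]]; rewrite ler_pdivrMr //.
  have t' : 0 < tau / l by apply: divr_gt0.
  have Gs' : G ((tau / l) *: (l *: x)) s by rewrite scalerA mulrVK ?unitfE ?gt_eqF.
  apply: le_trans (q_le t' Gs') _; rewrite le_eqVlt; apply/orP; left; apply/eqP.
  by field; apply/andP; split; apply/eqP; lra.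
Qed.

(* Hahn-Banach applied to the gauge: a linear functional below G + alpha. *)
Lemma G_minorant : exists gam, forall u s, G u s -> dotv gam u <= s + alpha.
Proof.
have [gam Hg] := sublinear_minorant q_sublin; exists gam => u s Gu.
have G1 : G (1 *: u) s by rewrite scale1r.
by have := q_le ltr01 G1; rewrite divr1; apply: le_trans.
Qed.

(* G contains whole lines in the directions of ker Psi, so a minorant of G
   vanishes on ker Psi and therefore factors through Psi. *)
Lemma minorant_factor gam : (forall u s, G u s -> dotv gam u <= s + alpha) ->
  exists v, forall u, dotv gam u = dotv v (Psi *m u).
Proof.
move=> GA.
have ker z : Psi *m z = 0 -> dotv gam z = 0.
  have [tau [s0 [t0 G0]]] := G_ray 0; rewrite scaler0 in G0.
  move=> hz; have Gl lam : G (lam *: z) s0.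
    case: G0 => x [t [Ct h]]; exists x, t; split => //.
    by rewrite -scalemxAr hz scaler0; rewrite mulmx0 in Ct.
  apply/eqP; apply/negP => /negP nz.
  have := GA _ _ (Gl ((s0 + alpha + 1) / dotv gam z)).
  by rewrite dotvZr divfK //; lra.
have gam_row : (gam^T <= Psi)%MS.
  rewrite submxE; apply/eqP/matrixP => i j; rewrite (ord1 i) [RHS]mxE.
  have := ker (cokermx Psi *m delta_mx j 0).
  rewrite mulmxA mulmx_coker mul0mx => /(_ erefl).
  rewrite -colE => h; apply: (etrans _ h).
  by rewrite /dotv mxE; apply: eq_bigr => k _; rewrite !mxE.
have [X hX] := submxP gam_row.
by exists X^T => u; rewrite !dotvE hX trmxK mulmxA.
Qed.

(* A functional v below G + alpha through Psi gives the sought inequality,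
   with an extra term in x that will force A^T v = w. *)
Lemma dual_bound v : (forall u s, G u s -> dotv v (Psi *m u) <= s + alpha) ->
  forall y t x, C (y, t) -> dotv v y - dotv (A^T *m v) x <= t - dotv w x + alpha.
Proof.
move=> Gv y t x Ct; have dy : edom g y by apply: D_dom; exists t.
pose u := col_mx ((pinvmx B)^T *m (y - a0)) (x0 - x).
have Pu : Psi *m u = y - A *m x.
  by rewrite /u mul_row_col row_coordK ?B_span // mulmxBr addrA subrK.
have Gu : G u (t - dotv w x) by exists x, t; split => //; rewrite Pu addrC subrK.
by have := Gv _ _ Gu; rewrite Pu dotvBr dotv_tr; lra.
Qed.

(* The dual vector: since the bound of dual_bound holds for all x at a fixed
   point of C, the functional <w - A^T v, .> is bounded above, hence zero. *)
Lemma dual_vector : exists v, A^T *m v = w /\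
  forall y t, C (y, t) -> dotv v y <= t + alpha.
Proof.
have [gam Gam] := G_minorant.
have [v hv] := minorant_factor Gam.
have Gv u s : G u s -> dotv v (Psi *m u) <= s + alpha by rewrite -hv; exact: Gam.
have bound := dual_bound Gv.
have [t0 Ct0] : D (Phi 0).
  by apply: D_box => i; rewrite mxE normr0 divr_ge0 // ltW // r_gt0.
exists v; split.
  apply/eqP; rewrite eq_sym -subr_eq0; apply/eqP.
  apply: (dotv_bounded0 (K := t0 + alpha - dotv v (Phi 0))) => x.
  by have := bound _ _ x Ct0; rewrite dotvBl; lra.
by move=> y t Ct; have := bound y t 0 Ct; rewrite !dotv0r; lra.
Qed.

End AffineCoordinates.

Lemma conj_bound : exists v, A^T *m v = w /\
  forall y, ((dotv v y)%:E - g y <= alpha%:E)%E.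
Proof.
have [m [B [B_rows B_span]]] := affine_spanning_rows (edom g) a0.
have [v [hv v_ub]] := dual_vector B_rows B_span.
exists v; split => // y.
have [gy|gy] := eqVneq (g y) +oo%E; first by rewrite gy /= leNye.
have dy : edom g y by rewrite /edom /= ltey.
rewrite (edom_fineK g_gtNy dy) -EFinB lee_fin lerBlDr (addrC alpha).
apply: (closure_halfspace v_ub); apply: epi_C.
by rewrite /epigraph /= -edom_fineK.
Qed.

End FiniteConjugate.

Lemma fconj_comp_le (R : realType) (p n : nat) (g : 'cV[R]_p -> \bar R)
    (A : 'M[R]_(p, n)) w v :
  A^T *m v = w -> (fconj (fun x => g (A *m x)) w <= fconj g v)%E.
Proof.
move=> hv; apply: ge_ereal_sup => _ [x _ <-].
by rewrite -hv dotv_tr; apply: ereal_sup_ubound; exists (A *m x).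
Qed.

Unset Implicit Arguments.

Theorem theorem6p7 (R : realType) (p n : nat) (g : 'cV[R]_p -> \bar R)
  (A : 'M[R]_(p, n)) :
  proper_fun g -> nearly_convex_fun g ->
  range (fun x : 'cV[R]_n => A *m x) `&` ri (edom g) !=set0 ->
  forall w : 'cV[R]_n,
    fconj (fun x => g (A *m x)) w
      = ereal_inf [set fconj g v | v in [set v : 'cV[R]_p | A^T *m v = w]]
    /\ (fconj (fun x => g (A *m x)) w \is a fin_num ->
        exists v : 'cV[R]_p, A^T *m v = w /\
          fconj (fun x => g (A *m x)) w = fconj g v).
Proof.
move=> [_ g_gtNy] [C [C_convex [C_epi epi_C]]] [_ [[x0 _ <-] [a0_dom [d [d_gt0 a0_ri]]]]] w.
set F := fconj _ w.
have F_le_inf : (F <= ereal_inf [set fconj g v | v in [set v | A^T *m v = w]])%E.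
  by apply: le_ereal_inf_tmp => _ [v hv <-]; apply: fconj_comp_le.
have F_lb : ((dotv w x0)%:E - g (A *m x0) <= F)%E by apply: ereal_sup_ubound; exists x0.
move: F_lb F_le_inf; rewrite (edom_fineK g_gtNy a0_dom) -EFinB.
case EF : F => [alpha| |] F_lb F_le_inf.
- have alpha_ub x : ((dotv w x)%:E - g (A *m x) <= alpha%:E)%E.
    by rewrite -EF; apply: ereal_sup_ubound; exists x.
  have [v [hv v_ub]] :=
    conj_bound g_gtNy C_convex C_epi epi_C a0_dom d_gt0 a0_ri alpha_ub.
  have Fv : fconj g v = alpha%:E.
    apply/eqP; rewrite eq_le -[X in _ && (X <= _)%E]EF fconj_comp_le // andbT.
    by apply: ge_ereal_sup => _ [y _ <-]; apply: v_ub.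
  split; last by exists v; rewrite Fv.
  apply/eqP; rewrite eq_le F_le_inf -Fv /=.
  by apply: ereal_inf_lbound; exists v.
- by split => //; apply/eqP; rewrite eq_le F_le_inf leey.
- by move: F_lb; rewrite leNgt ltNye.
Qed.
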